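(* Let $a=(a_1,\ldots,a_n)$ be a vector of positive integers and $d$ a positive integer with $a([n])=a_1+\cdots+a_n>d$, and let $I=I_{a,d}\subseteq S=K[x_1,\ldots,x_n]$ be the ideal of Veronese type. Let $k_0$ be the least positive integer $k$ such that $k(a([n])-d)\ge n-1$. Then the following are equivalent: (1) $\mathrm{Soc}(I)$ is equi-generated; (2) $\mathrm{Soc}^*(I)$ is equi-generated; (3) for every subset $A\subseteq[n]$ with $a(A)>d$ one has $k_0(a(A)-d)\ge|A|-1$.
   Context: $K$ is a field and $\mathfrak{m}=(x_1,\ldots,x_n)$. The ideal of Veronese type $I_{a,d}$ is generated by all monomials $x_1^{u_1}\cdots x_n^{u_n}$ of degree $d$ with $u_i\le a_i$ for all $i$. For $A\subseteq[n]$, $a(A)=\sum_{i\in A}a_i$. $\mathrm{Soc}(I)=\bigoplus_{m\ge0}(I^m:\mathfrak{m})/I^m$ is a graded module over the fiber cone $\mathcal{F}(I)=\bigoplus_{m\ge0}I^m/\mathfrak{m}I^m$ with $(I^m:\mathfrak{m})/I^m$ in degree $m$. For $m\ge1$, $\mathrm{soc}(I^m)$ is the ideal generated by the monomials $w$ of degree $md-1$ with $x_iw\in I^m$ for all $i$, and $\mathrm{Soc}^*(I)=\bigoplus_{m\ge1}\mathrm{soc}(I^m)$ is a graded module over the Rees ring $R(I)=\bigoplus_{m\ge0}I^m$ with $\mathrm{soc}(I^m)$ in degree $m$. A finitely generated graded module $M$ is equi-generated if it is generated by homogeneous elements of degree $\min\{i: M_i\neq0\}$. *)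

From mathcomp Require Import all_boot all_algebra.
From mathcomp Require Import mpoly.
Set Implicit Arguments. Unset Strict Implicit. Unset Printing Implicit Defensive.
Import GRing.Theory.
Local Open Scope ring_scope.

Section Ideals.
Variables (K : fieldType) (n : nat).
Local Notation S := {mpoly K[n]}.

Definition ideal_gen (G : S -> Prop) : S -> Prop :=
  fun p => exists s : seq (S * S),
    (forall x, x \in s -> G x.2) /\ p = \sum_(x <- s) x.1 * x.2.

Definition ideal_unit : S -> Prop := fun _ => True.
Definition ideal_add (J L : S -> Prop) : S -> Prop :=
  fun p => exists f g, J f /\ L g /\ p = f + g.
Definition ideal_mul (J L : S -> Prop) : S -> Prop :=
  ideal_gen (fun p => exists f g, J f /\ L g /\ p = f * g).
Definition ideal_pow (J : S -> Prop) (m : nat) : S -> Prop :=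
  iter m (ideal_mul J) ideal_unit.
Definition colon_max (J : S -> Prop) : S -> Prop :=
  fun f => forall i : 'I_n, J ('X_i * f).

Definition veronese_ideal (a : 'I_n -> nat) (d : nat) : S -> Prop :=
  ideal_gen (fun p => exists u : 'X_{1..n},
    p = 'X_[u] /\ mdeg u = d /\ forall i, (u i <= a i)%N).

(* Soc(I) = (+)_{m>=0} (I^m : m)/I^m as graded F(I)-module *)
Definition Soc_nonzero (I : S -> Prop) (m : nat) : Prop :=
  exists f, colon_max (ideal_pow I m) f /\ ~ ideal_pow I m f.
(* the graded F(I)-submodule generated by the degree-m0 part equals Soc(I):
   in degree m it is (I^(m-m0) (I^m0 : m) + I^m)/I^m *)
Definition Soc_generated_in (I : S -> Prop) (m0 : nat) : Prop :=
  forall m, (m0 <= m)%N -> forall f, colon_max (ideal_pow I m) f ->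
    ideal_add (ideal_mul (ideal_pow I (m - m0)) (colon_max (ideal_pow I m0)))
              (ideal_pow I m) f.

(* soc(I^m), m >= 1, for I equigenerated in degree d *)
Definition soc_pow (I : S -> Prop) (d m : nat) : S -> Prop :=
  ideal_gen (fun p => exists w : 'X_{1..n},
    p = 'X_[w] /\ mdeg w = (m * d - 1)%N /\
    forall i : 'I_n, ideal_pow I m ('X_i * 'X_[w])).
(* Soc*(I) = (+)_{m>=1} soc(I^m) as graded R(I)-module *)
Definition SocStar_nonzero (I : S -> Prop) (d m : nat) : Prop :=
  exists f, soc_pow I d m f /\ f != 0.
Definition SocStar_generated_in (I : S -> Prop) (d m0 : nat) : Prop :=
  forall m, (m0 <= m)%N -> forall f, soc_pow I d m f ->
    ideal_mul (ideal_pow I (m - m0)) (soc_pow I d m0) f.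

End Ideals.

(* a graded module with components indexed by degrees >= lo, given by
   "component i is nonzero" and "generated by component m0", is
   equi-generated if it is generated in degree min{i : M_i <> 0} *)
Definition equi_generated (lo : nat) (nz gen : nat -> Prop) : Prop :=
  forall m0, (lo <= m0)%N -> nz m0 ->
    (forall i, (lo <= i < m0)%N -> ~ nz i) -> gen m0.

Definition aA (n : nat) (a : 'I_n -> nat) (A : {set 'I_n}) : nat :=
  (\sum_(i in A) a i)%N.

From mathcomp Require Import all_boot all_algebra.
From mathcomp Require Import mpoly.
From mathcomp Require Import zify.

Set Implicit Arguments. Unset Strict Implicit. Unset Printing Implicit Defensive.

Import GRing.Theory.

(* All ideals involved are monomial, and the m-th power of I = I_{a,d} is
   I_{ma,md}.  A monomial u lies in (I^m : m) but not in I^m exactly when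
   deg u = md - 1 and u_i < m a_i for all i (a socle monomial of level m); such
   monomials exist iff m (a([n]) - d) >= n - 1, i.e. iff m >= k0, so Soc(I) and
   Soc*(I) both start in degree k0, and each is generated there iff every socle
   monomial of level m >= k0 is divisible by a generator of I^(m-k0) times a
   socle monomial of level k0.  Under (3) such a factorisation is found
   coordinatewise by a discrete intermediate value argument.  If (3) fails at A,
   a socle monomial of large level supported on A has no such factorisation,
   because a socle monomial of level k0 supported on A exists only when
   |A| - 1 <= k0 (a(A) - d). *)

Section Monomials.
Variable n : nat.
Local Notation mono := 'X_{1..n}.
Implicit Types (M G : mono -> Prop) (u v : mono).

Lemma mdeg_lepm (u v : mono) : (u <= v)%MM -> mdeg u <= mdeg v.
Proof. by move=> /mnm_lepP h; rewrite !mdegE; apply: leq_sum => i _. Qed.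

Lemma mdeg_subm (u v : mono) : (u <= v)%MM -> mdeg (v - u) = mdeg v - mdeg u.
Proof. by move=> huv; rewrite -{2}(submK huv) mdegD addnK. Qed.

Lemma lepmD (u1 u2 v1 v2 : mono) :
  (u1 <= v1)%MM -> (u2 <= v2)%MM -> (u1 + u2 <= v1 + v2)%MM.
Proof.
move=> /mnm_lepP h1 /mnm_lepP h2; apply/mnm_lepP => i.
by rewrite !mnmDE leq_add.
Qed.

Lemma mdeg_between (l u : mono) s : (l <= u)%MM -> mdeg l <= s <= mdeg u ->
  exists2 v : mono, (l <= v)%MM && (v <= u)%MM & mdeg v = s.
Proof.
move=> hlu /andP [hls]; rewrite -(subnK hls); move: (s - mdeg l) => k {s hls}.
elim: k l hlu => [|k IH] l hlu hk; first by exists l; rewrite ?lepm_refl.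
have [i hi | hnone] := pickP (fun i => l i < u i); last first.
  suff : mdeg u <= mdeg l by lia.
  by apply/mdeg_lepm/mnm_lepP => i; rewrite leqNgt hnone.
have hli : (l + U_(i) <= u)%MM.
  apply/mnm_lepP => j; rewrite mnmDE mnm1E.
  by case: eqP => [<-|_]; rewrite ?addn1 ?addn0 //; apply/mnm_lepP.
have [|v /andP [hlv hvu] hv] := IH _ hli; first by rewrite mdegD mdeg1; lia.
exists v; last by rewrite hv mdegD mdeg1; lia.
by rewrite hvu andbT; apply: lepm_trans hlv; apply: lem_addr.
Qed.

Lemma exists_mon_between (L U : 'I_n -> nat) s : (forall i, L i <= U i) ->
  \sum_i L i <= s <= \sum_i U i ->
  exists2 v : mono, (forall i, L i <= v i <= U i) & mdeg v = s.
Proof.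
pose mk (f : 'I_n -> nat) : mono := [multinom f i | i < n].
have mdeg_mk f : mdeg (mk f) = \sum_i f i.
  by rewrite mdegE; apply: eq_bigr => i _; rewrite mnmE.
move=> hLU hs; have [||v /andP [/mnm_lepP hl /mnm_lepP hu] hv] := @mdeg_between (mk L) (mk U) s.
- by apply/mnm_lepP => i; rewrite !mnmE.
- by rewrite !mdeg_mk.
by exists v => // i; have := hl i; have := hu i; rewrite !mnmE => -> ->.
Qed.

Definition upward_closed M := forall u v, M u -> (u <= v)%MM -> M v.
Definition upset G u := exists2 v, G v & (v <= u)%MM.
Definition mset_sum M1 M2 u :=
  exists u1 u2, [/\ M1 u1, M2 u2 & (u1 + u2 <= u)%MM].

Lemma upset_closed G : upward_closed (upset G).
Proof. by move=> u v [w hw hwu] huv; exists w => //; apply: lepm_trans huv. Qed.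

Lemma mset_sum_closed M1 M2 : upward_closed (mset_sum M1 M2).
Proof.
move=> u v [u1 [u2 [h1 h2 h12]]] huv.
by exists u1, u2; split=> //; apply: lepm_trans huv.
Qed.

Lemma mset_sum_upsetr M G u : mset_sum M (upset G) u <-> mset_sum M G u.
Proof.
split=> [[u1 [u2 [h1 [w hw hwu2] h12]]] | [u1 [u2 [h1 h2 h12]]]].
  by exists u1, w; split=> //; apply: lepm_trans (lepmD (lepm_refl u1) hwu2) h12.
by exists u1, u2; split=> //; exists u2 => //; apply: lepm_refl.
Qed.

End Monomials.

Section MonomialIdeals.
Local Open Scope ring_scope.
Variables (K : fieldType) (n : nat).
Local Notation S := {mpoly K[n]}.
Local Notation mono := 'X_{1..n}.
Implicit Types (M : mono -> Prop) (J L : S -> Prop) (p q : S) (u v : mono).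

Definition msupp_in M p := forall u, u \in msupp p -> M u.
Definition monomial_ideal J M := forall p, J p <-> msupp_in M p.

Lemma msupp_in0 M : msupp_in M 0.
Proof. by move=> u; rewrite msupp0. Qed.

Lemma msupp_inD M p q : msupp_in M p -> msupp_in M q -> msupp_in M (p + q).
Proof. by move=> hp hq u /msuppD_le; rewrite mem_cat => /orP [/hp|/hq]. Qed.

Lemma msupp_inZX M c u : M u -> msupp_in M (c *: 'X_[u]).
Proof. by move=> hu v /msuppZ_le; rewrite msuppX mem_seq1 => /eqP ->. Qed.

Lemma msupp_inX M u : msupp_in M 'X_[u] <-> M u.
Proof.
split=> [|hu v]; first by apply; rewrite msuppX mem_seq1.
by rewrite msuppX mem_seq1 => /eqP ->.
Qed.

Lemma msupp_inMl M p q : upward_closed M -> msupp_in M p -> msupp_in M (q * p).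
Proof.
move=> upM hp u /msuppM_le /allpairsP [[u1 u2] /= [_ h2 ->]].
exact: upM (hp _ h2) (lem_addl _ _).
Qed.

Lemma msupp_in_ind M (P : S -> Prop) :
  P 0 -> (forall p q, P p -> P q -> P (p + q)) ->
  (forall c u, M u -> P (c *: 'X_[u])) -> forall p, msupp_in M p -> P p.
Proof.
move=> P0 PD PX p; rewrite [p in P p]mpolyE /msupp_in.
elim: (msupp p) => [|u r IH] hM; first by rewrite big_nil.
rewrite big_cons; apply: PD; first by apply/PX/hM/mem_head.
by apply: IH => v hv; apply: hM; rewrite in_cons hv orbT.
Qed.

Lemma monomial_idealX J M u : monomial_ideal J M -> J 'X_[u] <-> M u.
Proof. by move=> hJ; rewrite hJ msupp_inX. Qed.

Lemma monomial_ideal_ext J M M' :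
  monomial_ideal J M -> (forall u, M u <-> M' u) -> monomial_ideal J M'.
Proof. by move=> hJ eM p; rewrite hJ; split=> h u /h /eM. Qed.

Lemma mpolyX_sub u v : (u <= v)%MM -> 'X_[v] = 'X_[v - u] * 'X_[u] :> S.
Proof. by move=> h; rewrite -mpolyXD submK. Qed.

Section IdealGen.
Variable B : S -> Prop.

Lemma ideal_gen0 : ideal_gen B 0.
Proof. by exists [::]; rewrite big_nil. Qed.

Lemma ideal_genD p q : ideal_gen B p -> ideal_gen B q -> ideal_gen B (p + q).
Proof.
move=> [s1 [h1 ->]] [s2 [h2 ->]]; exists (s1 ++ s2); rewrite big_cat.
by split=> // x; rewrite mem_cat => /orP [/h1|/h2].
Qed.

Lemma ideal_genMl q p : ideal_gen B p -> ideal_gen B (q * p).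
Proof.
move=> [s [h ->]]; exists [seq (q * x.1, x.2) | x <- s]; split.
  by move=> x /mapP [y /h hy ->].
by rewrite big_map mulr_sumr; apply: eq_bigr => x _; rewrite mulrA.
Qed.

Lemma ideal_gen_base g : B g -> ideal_gen B g.
Proof.
move=> hg; exists [:: (1, g)]; rewrite big_seq1 mul1r.
by split=> // x; rewrite mem_seq1 => /eqP ->.
Qed.

Lemma ideal_genMX c u v : B 'X_[u] -> (u <= v)%MM ->
  ideal_gen B (c *: 'X_[v]).
Proof.
move=> hu huv; rewrite (mpolyX_sub huv) -mul_mpolyC mulrA.
exact/ideal_genMl/ideal_gen_base.
Qed.

Lemma ideal_gen_msupp_in M p : upward_closed M -> (forall g, B g -> msupp_in M g) ->
  ideal_gen B p -> msupp_in M p.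
Proof.
move=> upM hB [s [hs ->]]; elim: s hs => [|x s IH] hs; first by rewrite big_nil; apply: msupp_in0.
rewrite big_cons; apply: msupp_inD; first exact: msupp_inMl upM (hB _ (hs _ (mem_head _ _))).
by apply: IH => y hy; apply: hs; rewrite in_cons hy orbT.
Qed.

End IdealGen.

Lemma msupp_inM M1 M2 f g :
  msupp_in M1 f -> msupp_in M2 g -> msupp_in (mset_sum M1 M2) (f * g).
Proof.
move=> hf hg u /msuppM_le /allpairsP [[u1 u2] /= [h1 h2 ->]].
by exists u1, u2; split; [exact: hf | exact: hg | exact: lepm_refl].
Qed.

Lemma ideal_gen_monomial (G : mono -> Prop) :
  monomial_ideal (ideal_gen (fun p => exists u, p = 'X_[u] /\ G u)) (upset G).
Proof.
move=> p; split.
  apply: ideal_gen_msupp_in => [|_ [u [-> hu]]]; first exact: upset_closed.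
  by apply/msupp_inX; exists u => //; apply: lepm_refl.
apply: msupp_in_ind; [exact: ideal_gen0 | by move=> ? ?; apply: ideal_genD |].
by move=> c u [w hw hwu]; apply: ideal_genMX hwu; exists w.
Qed.

Lemma ideal_unit_monomial : monomial_ideal (@ideal_unit K n) (fun _ => True).
Proof. by []. Qed.

Lemma ideal_mul_monomial J L M1 M2 : monomial_ideal J M1 -> monomial_ideal L M2 ->
  monomial_ideal (ideal_mul J L) (mset_sum M1 M2).
Proof.
move=> hJ hL p; split.
  apply: ideal_gen_msupp_in => [|_ [f [g [/hJ hf [/hL hg ->]]]]]; first exact: mset_sum_closed.
  exact: msupp_inM.
apply: msupp_in_ind; [exact: ideal_gen0 | by move=> ? ?; apply: ideal_genD |].
move=> c u [u1 [u2 [h1 h2 h12]]]; apply: ideal_genMX h12.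
by exists 'X_[u1], 'X_[u2]; rewrite mpolyXD (monomial_idealX _ hJ) (monomial_idealX _ hL).
Qed.

Lemma ideal_add_monomial J L M1 M2 : monomial_ideal J M1 -> monomial_ideal L M2 ->
  monomial_ideal (ideal_add J L) (fun u => M1 u \/ M2 u).
Proof.
move=> hJ hL p; split.
  move=> [f [g [/hJ hf [/hL hg ->]]]] u /msuppD_le.
  by rewrite mem_cat => /orP [/hf|/hg]; [left | right].
apply: msupp_in_ind.
- by exists 0, 0; rewrite hJ hL addr0; do !split; apply: msupp_in0.
- move=> _ _ [f1 [g1 [/hJ hf1 [/hL hg1 ->]]]] [f2 [g2 [/hJ hf2 [/hL hg2 ->]]]].
  exists (f1 + f2), (g1 + g2); rewrite addrACA hJ hL.
  by do !split; apply: msupp_inD.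
- move=> c u [h|h]; [exists (c *: 'X_[u]), 0 | exists 0, (c *: 'X_[u])];
    rewrite ?addr0 ?add0r hJ hL; do !split; by [apply: msupp_inZX | apply: msupp_in0].
Qed.

Lemma colon_max_monomial J M : monomial_ideal J M ->
  monomial_ideal (colon_max J) (fun u => forall i : 'I_n, M (U_(i) + u)%MM).
Proof.
move=> hJ p; split.
  move=> h u hu i; apply: (proj1 (hJ _) (h i)).
  by rewrite mulrC (perm_mem (msuppMX _ _)); apply: map_f.
move=> h i; apply/hJ => v; rewrite mulrC (perm_mem (msuppMX _ _)).
by case/mapP => u hu ->; apply: h.
Qed.

End MonomialIdeals.

Section VeroneseMonomials.
Variables (n : nat) (a : 'I_n -> nat) (d : nat).
Local Notation mono := 'X_{1..n}.
Implicit Types (u v w : mono) (m p q k : nat).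

Definition pow_gens m v := mdeg v = m * d /\ forall i, v i <= m * a i.
Definition pow_mons m := upset (pow_gens m).
Definition socle_mon m u := mdeg u = m * d - 1 /\ forall i, u i < m * a i.
Definition socle_generated_in k := forall m, k <= m ->
  forall u, socle_mon m u -> mset_sum (pow_mons (m - k)) (socle_mon k) u.

Lemma pow_mons_sum m u : pow_mons m u <-> m * d <= \sum_i minn (u i) (m * a i).
Proof.
split=> [[v [hv hva] /mnm_lepP hvu] | hs].
  by rewrite -hv mdegE; apply: leq_sum => i _; rewrite leq_min hva hvu.
have [|v hv hdeg] := @exists_mon_between n (fun=> 0) (fun i => minn (u i) (m * a i))
  (m * d) (fun=> leq0n _); first by rewrite big1.
exists v; first by split=> // i; have := hv i; lia.
by apply/mnm_lepP => i; have := hv i; lia.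
Qed.

Lemma pow_mons0 u : pow_mons 0 u.
Proof.
exists 0%MM; last by apply/mnm_lepP => i; rewrite mnm0E.
by split=> [|i]; rewrite ?mdeg0 ?mnm0E.
Qed.

Lemma pow_monsD p q u v : pow_mons p u -> pow_mons q v -> pow_mons (p + q) (u + v).
Proof.
move=> [u' [hu' hua] huu'] [v' [hv' hva] hvv']; exists (u' + v')%MM; last exact: lepmD.
split=> [|i]; first by rewrite mdegD hu' hv' mulnDl.
by rewrite mnmDE mulnDl leq_add.
Qed.

(* The two bounds that let [exists_mon_between] split a monomial of level p + q
   into levels p and q; the slack [r] and the hypothesis on [C] make room for
   socle monomials, whose degree falls one short. *)
Lemma sum_minn_ge p q r (w : 'I_n -> nat) :
  (forall i, w i <= (p + q) * a i) -> r <= q -> (p + q) * d <= \sum_i w i + r ->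
  p * d <= \sum_i minn (w i) (p * a i).
Proof.
move=> hw hr hs; set B := \sum_i ((p * a i < w i) * a i).
have e1 : \sum_i minn (w i) (p * a i) = p * B + \sum_i ((w i <= p * a i) * w i).
  rewrite big_distrr -big_split; apply: eq_bigr => i _ /=.
  by case: leqP => h; rewrite ?mul0n ?mul1n ?muln0 ?addn0 ?add0n; lia.
have e2 : \sum_i w i = \sum_i ((p * a i < w i) * w i) + \sum_i ((w i <= p * a i) * w i).
  by rewrite -big_split; apply: eq_bigr => i _ /=; case: leqP; lia.
have e3 : \sum_i ((p * a i < w i) * w i) <= p * B + q * B.
  rewrite -mulnDl big_distrr; apply: leq_sum => i _.
  by case: leqP; rewrite ?mul0n ?mul1n ?muln0.
rewrite e1; have [hdB|hdB] := leqP d B.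
  have : p * d <= p * B by rewrite leq_mul2l hdB orbT.
  lia.
have : q * B.+1 <= q * d by rewrite leq_mul2l hdB orbT.
rewrite mulnS mulnDl in hs *; lia.
Qed.

Lemma sum_subn_le p q (w : 'I_n -> nat) :
  (forall i, w i <= (p + q) * a i) ->
  (forall C : {set 'I_n}, d < aA a C -> \sum_(i in C) w i <= q * aA a C + p * d) ->
  \sum_i (w i - q * a i) <= p * d.
Proof.
move=> hw hC; pose C : {set 'I_n} := [set i | q * a i < w i].
have -> : \sum_i (w i - q * a i) = \sum_(i in C) (w i - q * a i).
  rewrite [RHS]big_mkcond; apply: eq_bigr => i _; rewrite inE.
  by case: ltnP => // h; apply/eqP; rewrite subn_eq0.
have hle : \sum_(i in C) (w i - q * a i) <= p * aA a C.
  by rewrite /aA big_distrr; apply: leq_sum => i _ /=; have := hw i; rewrite mulnDl; lia.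
have heq : \sum_(i in C) (w i - q * a i) + q * aA a C = \sum_(i in C) w i.
  by rewrite /aA big_distrr -big_split; apply: eq_bigr => i; rewrite inE => /ltnW /subnK.
have [hCd|hCd] := leqP (aA a C) d.
  by apply: leq_trans hle _; rewrite leq_mul2l hCd orbT.
by have := hC _ hCd; lia.
Qed.

Lemma pow_gens_split p q v : pow_gens (p + q) v ->
  exists v1, [/\ pow_gens p v1, pow_gens q (v - v1) & (v1 <= v)%MM].
Proof.
move=> [hdeg hva]; have hsum : \sum_i v i = p * d + q * d by rewrite -mdegE hdeg mulnDl.
have [||v1 hv1 hdeg1] := @exists_mon_between n (fun i => v i - q * a i)
  (fun i => minn (v i) (p * a i)) (p * d).
- by move=> i; have := hva i; rewrite mulnDl; lia.
- rewrite (@sum_minn_ge p q 0) ?addn0 ?hsum ?mulnDl ?andbT //.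
  apply: sum_subn_le => // C hC; rewrite addnC; apply: leq_trans (_ : _ <= p * d + q * d) _.
    by rewrite -hsum big_mkcond; apply: leq_sum => i _; case: ifP.
  by rewrite leq_add2l leq_mul2l ltnW ?orbT.
have hv1v : (v1 <= v)%MM by apply/mnm_lepP => i; have := hv1 i; lia.
exists v1; split => //; first by split=> // i; have := hv1 i; lia.
split=> [|i]; first by rewrite mdeg_subm // hdeg hdeg1 mulnDl addKn.
by rewrite mnmBE; have := hv1 i; have := hva i; rewrite mulnDl; lia.
Qed.

Lemma pow_monsDE p q u : mset_sum (pow_mons p) (pow_mons q) u <-> pow_mons (p + q) u.
Proof.
split=> [[u1 [u2 [h1 h2 h12]]] | [v hv hvu]].
  exact: upset_closed (pow_monsD h1 h2) h12.
have [v1 [hv1 hv2 hv1v]] := pow_gens_split hv.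
exists v1, (v - v1)%MM; split; [exists v1 | exists (v - v1)%MM |] => //; try exact: lepm_refl.
by rewrite addmC submK.
Qed.

End VeroneseMonomials.

Section SocleMonomials.
Variables (n : nat) (a : 'I_n -> nat) (d : nat).
Hypothesis a_gt0 : forall i, 0 < a i.
Hypothesis d_gt0 : 0 < d.
Local Notation mono := 'X_{1..n}.
Local Notation pow_gens := (pow_gens a d).
Local Notation pow_mons := (pow_mons a d).
Local Notation socle_mon := (socle_mon a d).
Implicit Types (u v w : mono) (m p k : nat).

Lemma socle_mon_notin_pow m u : 0 < m -> socle_mon m u -> ~ pow_mons m u.
Proof.
move=> m_gt0 [hu _] [v [hv _] /mdeg_lepm]; rewrite hu hv.
have : 0 < m * d by rewrite muln_gt0 m_gt0 d_gt0.
lia.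
Qed.

Lemma socle_mon_colon m u i : 0 < m -> socle_mon m u -> pow_mons m (U_(i) + u).
Proof.
move=> m_gt0 [hu hlt]; exists (U_(i) + u)%MM; last exact: lepm_refl.
have hmd : 0 < m * d by rewrite muln_gt0 m_gt0 d_gt0.
split=> [|j]; first by rewrite mdegD mdeg1 hu; lia.
by rewrite mnmDE mnm1E; have := hlt j; case: (i == j); lia.
Qed.

Lemma sum_minn_addU m u i : \sum_j minn ((U_(i) + u)%MM j) (m * a j) <=
  \sum_j minn (u j) (m * a j) + (u i < m * a i).
Proof.
rewrite (bigD1 i) // [X in _ <= X + _](bigD1 i) //= mnmDE mnm1E eqxx.
rewrite (eq_bigr (fun j => minn (u j) (m * a j))) => [|j hj]; last first.
  by rewrite mnmDE mnm1E eq_sym (negbTE hj).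
by case: ltnP; lia.
Qed.

Lemma colon_pow_monsE m u : 0 < n -> 0 < m ->
  (forall i, pow_mons m (U_(i) + u)) <-> pow_mons m u \/ socle_mon m u.
Proof.
move=> n_gt0 m_gt0; split=> [hU | [hu i | hu i]]; last first.
- exact: socle_mon_colon.
- exact: upset_closed hu (lem_addl _ _).
have [hin|hout] := leqP (m * d) (\sum_i minn (u i) (m * a i)).
  by left; apply/pow_mons_sum.
have hlt i : u i < m * a i.
  have /pow_mons_sum := hU i; have := sum_minn_addU m u i.
  by case: ltnP => //; lia.
right; split=> //; have /pow_mons_sum := hU (Ordinal n_gt0).
have := sum_minn_addU m u (Ordinal n_gt0); rewrite hlt mdegE.
have e : \sum_i minn (u i) (m * a i) = \sum_i u i.
  by apply: eq_bigr => i _; apply/minn_idPl/ltnW.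
by rewrite e in hout *; lia.
Qed.

Lemma exists_socle_mon_on m (A : {set 'I_n}) : 0 < m -> d <= aA a A ->
  (exists2 u, socle_mon m u & forall i, i \notin A -> u i = 0) <->
  #|A| - 1 <= m * (aA a A - d).
Proof.
move=> m_gt0 hdA; have hmd : 0 < m * d by rewrite muln_gt0 m_gt0 d_gt0.
have hma i : 0 < m * a i by rewrite muln_gt0 m_gt0 a_gt0.
have hsumA : \sum_(i in A) (m * a i - 1) + #|A| = m * aA a A.
  rewrite -sum1_card -big_split /aA big_distrr; apply: eq_bigr => i _ /=.
  by have := hma i; lia.
have hmdA : m * d <= m * aA a A by rewrite leq_mul2l hdA orbT.
rewrite mulnBr; split=> [[u [hdeg hlt] hA] | hcard].
  have : \sum_i u i <= \sum_(i in A) (m * a i - 1).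
    rewrite [X in _ <= X]big_mkcond; apply: leq_sum => i _.
    by case: ifPn => hi; [have := hlt i; lia | rewrite hA].
  by rewrite -mdegE hdeg; lia.
have hA : 0 < #|A|.
  case: (posnP #|A|) => // /eqP; rewrite cards_eq0 => /eqP A0.
  by move: hdA; rewrite A0 /aA big_set0; lia.
have [|u hu hdeg] := @exists_mon_between n (fun=> 0)
  (fun i => if i \in A then m * a i - 1 else 0) (m * d - 1) (fun=> leq0n _).
  suff h : m * d - 1 <= \sum_(i in A) (m * a i - 1) by rewrite big1 // -big_mkcond.
  lia.
exists u; first by split=> // i; have := hu i; have := hma i; case: (i \in A); lia.
by move=> i /negbTE hi; have := hu i; rewrite hi; lia.
Qed.

Lemma exists_socle_mon m : 0 < m -> d <= aA a [set: 'I_n] ->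
  (exists u, socle_mon m u) <-> n - 1 <= m * (aA a [set: 'I_n] - d).
Proof.
move=> m_gt0 hd; have := exists_socle_mon_on m_gt0 hd; rewrite cardsT card_ord => <-.
by split=> [[u hu] | [u hu _]]; exists u => // i; rewrite in_setT.
Qed.

(* The factor v of level p is squeezed coordinatewise between u_i + 1 - k a_i
   and min(u_i, p a_i), so that u - v is a socle monomial of level k; the
   condition at C = {i | k a_i <= u_i} is what makes degree p d reachable. *)
Lemma socle_mon_split k m u : 0 < k -> k <= m ->
  (forall C : {set 'I_n}, d < aA a C -> #|C| - 1 <= k * (aA a C - d)) ->
  socle_mon m u -> mset_sum (pow_mons (m - k)) (socle_mon k) u.
Proof.
move=> k_gt0 hkm hcond; have [p ->] : exists p, m = p + k by exists (m - k); rewrite subnK.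
rewrite addnK => -[hdeg hlt].
have hka i : 0 < k * a i by rewrite muln_gt0 k_gt0 a_gt0.
have hsum : \sum_i u i + 1 = p * d + k * d.
  by rewrite -mdegE hdeg -mulnDl subnK // muln_gt0 addn_gt0 k_gt0 orbT d_gt0.
have [||v hv hdegv] := @exists_mon_between n (fun i => (u i).+1 - k * a i)
  (fun i => minn (u i) (p * a i)) (p * d).
- by move=> i; have := hlt i; have := hka i; rewrite mulnDl; lia.
- apply/andP; split.
    apply: sum_subn_le => [i|C hC]; first exact: hlt.
    have -> : \sum_(i in C) (u i).+1 = \sum_(i in C) u i + #|C|.
      by rewrite -sum1_card -big_split; apply: eq_bigr => i _ /=; rewrite addn1.
    have : \sum_(i in C) u i <= \sum_i u i.
      by rewrite [X in X <= _]big_mkcond; apply: leq_sum => i _; case: ifP.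
    have : k * d <= k * aA a C by rewrite leq_mul2l ltnW ?orbT.
    by have := hcond C hC; rewrite mulnBr; lia.
  apply: (@sum_minn_ge n a d p k 1) => [i|//|]; first exact: ltnW.
  by rewrite hsum mulnDl.
have hvu : (v <= u)%MM by apply/mnm_lepP => i; have := hv i; lia.
exists v, (u - v)%MM; split.
- by exists v; [split=> // i; have := hv i; lia | exact: lepm_refl].
- split=> [|i]; first by rewrite mdeg_subm // hdeg hdegv mulnDl; lia.
  by rewrite mnmBE; have := hv i; have := hka i; have := hlt i; rewrite mulnDl; lia.
- by rewrite addmC submK // lepm_refl.
Qed.

(* A level-k factor of a socle monomial supported on A is supported on A too. *)
Lemma socle_condition_of_generated k : 0 < k -> socle_generated_in a d k ->
  forall A : {set 'I_n}, d < aA a A -> #|A| - 1 <= k * (aA a A - d).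
Proof.
move=> k_gt0 hgen A hA; pose m := maxn k #|A|.
have m_gt0 : 0 < m by apply: leq_trans k_gt0 (leq_maxl _ _).
have [|u hu huA] := proj2 (exists_socle_mon_on m_gt0 (ltnW hA)).
  apply: leq_trans (leq_subr 1 _) _; apply: leq_trans (leq_maxr k _) _.
  by rewrite leq_pmulr // subn_gt0.
have [v [w [_ hw hvw]]] := hgen m (leq_maxl _ _) u hu.
apply/(exists_socle_mon_on k_gt0 (ltnW hA)); exists w => // i hi.
by move/mnm_lepP: hvw => /(_ i); rewrite mnmDE huA //; lia.
Qed.

Lemma socle_generated_inE k : 0 < k -> socle_generated_in a d k <->
  (forall A : {set 'I_n}, d < aA a A -> #|A| - 1 <= k * (aA a A - d)).
Proof.
move=> k_gt0; split; first exact: socle_condition_of_generated.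
by move=> hcond m hkm u; apply: socle_mon_split.
Qed.

End SocleMonomials.

Section VeroneseIdeal.
Variables (K : fieldType) (n : nat) (a : 'I_n -> nat) (d : nat).
Hypothesis d_gt0 : 0 < d.
Hypothesis n_gt0 : 0 < n.
Local Notation I := (@veronese_ideal K n a d).
Local Notation pow_mons := (pow_mons a d).
Local Notation socle_mon := (socle_mon a d).

Lemma veronese_ideal_monomial : monomial_ideal I (pow_mons 1).
Proof.
apply: monomial_ideal_ext (ideal_gen_monomial _) _ => u.
split=> -[v [hv hva] hvu]; exists v => //; split=> [|i]; rewrite ?hv ?mul1n //;
  by have := hva i; rewrite mul1n.
Qed.

Lemma ideal_pow_veronese m : monomial_ideal (ideal_pow I m) (pow_mons m).
Proof.
elim: m => [|m IH].
  by apply: (monomial_ideal_ext (@ideal_unit_monomial K n)) => u; split=> // _; apply: pow_mons0.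
exact: monomial_ideal_ext (ideal_mul_monomial veronese_ideal_monomial IH) (pow_monsDE _ _ 1 m).
Qed.

Lemma colon_pow_veronese m : 0 < m ->
  monomial_ideal (colon_max (ideal_pow I m)) (fun u => pow_mons m u \/ socle_mon m u).
Proof.
move=> m_gt0; apply: monomial_ideal_ext (colon_max_monomial (ideal_pow_veronese m)) _.
by move=> u; apply: colon_pow_monsE.
Qed.

Lemma soc_pow_veronese m : 0 < m ->
  monomial_ideal (soc_pow I d m) (upset (socle_mon m)).
Proof.
move=> m_gt0; apply: monomial_ideal_ext (ideal_gen_monomial _) _ => u.
suff eG w : (mdeg w = m * d - 1 /\ forall i, ideal_pow I m ('X_i * 'X_[w])) <-> socle_mon m w.
  by split=> -[w /eG hw hwu]; exists w.
have powX i : ideal_pow I m ('X_i * 'X_[w]) <-> pow_mons m (U_(i) + w).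
  by rewrite -mpolyXD; apply: monomial_idealX (ideal_pow_veronese m).
split=> [[hdeg hX] | hw]; last by split=> [|i]; [case: hw | apply/powX/socle_mon_colon].
have /(colon_pow_monsE a d_gt0 w n_gt0 m_gt0) [[v [hv _] /mdeg_lepm]|//] :
    forall i, pow_mons m (U_(i) + w) by move=> i; apply/powX.
have : 0 < m * d by rewrite muln_gt0 m_gt0 d_gt0.
by rewrite hdeg hv; lia.
Qed.

Lemma Soc_nonzeroE m : Soc_nonzero I m <-> 0 < m /\ exists u, socle_mon m u.
Proof.
split=> [[f [hcol hnot]] | [m_gt0 [u hu]]].
  have m_gt0 : 0 < m by case: (posnP m) => // m0; case: hnot; rewrite m0.
  split=> //; move/(colon_pow_veronese m_gt0): hcol => hcol.
  have /allPn [u hu /negP hnu] : ~~ all (fun u : 'X_{1..n} => m * d <= \sum_i minn (u i) (m * a i)) (msupp f).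
    apply/negP => /allP hall; apply/hnot/(ideal_pow_veronese m) => u /hall.
    by move/pow_mons_sum.
  by case: (hcol u hu) => [/pow_mons_sum|]; [|exists u].
exists 'X_[u]; split; first by apply/(monomial_idealX _ (colon_pow_veronese m_gt0)); right.
by move/(monomial_idealX _ (ideal_pow_veronese m)); apply: socle_mon_notin_pow.
Qed.

Lemma SocStar_nonzeroE m : 0 < m -> SocStar_nonzero I d m <-> exists u, socle_mon m u.
Proof.
move=> m_gt0; split=> [[f [/(soc_pow_veronese m_gt0) hf f_neq0]] | [u hu]].
  case E: (msupp f) => [|u r]; first by move/eqP: E; rewrite msupp_eq0 (negbTE f_neq0).
  by have [|w hw _] := hf u; [rewrite E mem_head | exists w].
exists 'X_[u]; split.
  by apply/(monomial_idealX _ (soc_pow_veronese m_gt0)); exists u => //; apply: lepm_refl.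
by rewrite -msupp_eq0 msuppX.
Qed.

Lemma SocStar_generated_inE k : 0 < k ->
  SocStar_generated_in I d k <-> socle_generated_in a d k.
Proof.
move=> k_gt0; have hprod m := ideal_mul_monomial (K := K)
  (ideal_pow_veronese (m - k)) (soc_pow_veronese k_gt0).
split=> hgen m hkm; have m_gt0 := leq_trans k_gt0 hkm.
  move=> u hu; apply/mset_sum_upsetr/(monomial_idealX _ (hprod m)); apply: hgen => //.
  by apply/(monomial_idealX _ (soc_pow_veronese m_gt0)); exists u => //; apply: lepm_refl.
move=> f /(soc_pow_veronese m_gt0) hf; apply/(hprod m) => u /hf [w hw hwu].
exact/mset_sum_upsetr/(mset_sum_closed (hgen m hkm w hw) hwu).
Qed.

Lemma Soc_generated_inE k : 0 < k -> Soc_generated_in I k <-> socle_generated_in a d k.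
Proof.
move=> k_gt0; have hsum m := ideal_add_monomial (ideal_mul_monomial
  (ideal_pow_veronese (m - k)) (colon_pow_veronese k_gt0)) (ideal_pow_veronese m).
split=> hgen m hkm; have m_gt0 := leq_trans k_gt0 hkm.
  move=> u hu; have hnot := socle_mon_notin_pow d_gt0 m_gt0 hu.
  have hX : colon_max (ideal_pow I m) 'X_[u].
    by apply/(monomial_idealX _ (colon_pow_veronese m_gt0)); right.
  have /(monomial_idealX _ (hsum m)) := hgen m hkm _ hX.
  case=> [[u1 [u2 [h1 [h2|h2] h12]]] | //]; last by exists u1, u2.
  by case: hnot; rewrite -(subnK hkm); apply: upset_closed (pow_monsD h1 h2) h12.
move=> f /(colon_pow_veronese m_gt0) hf; apply/(hsum m) => u /hf [|/(hgen m hkm)]; first by right.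
by move=> [v [w [hv hw hvw]]]; left; exists v, w; split=> //; right.
Qed.

End VeroneseIdeal.

Lemma equi_generatedE lo (nz gen : nat -> Prop) k : lo <= k ->
  (forall i, lo <= i -> nz i <-> k <= i) -> equi_generated lo nz gen <-> gen k.
Proof.
move=> hlo hnz; split=> [hgen | hk m hm hnzm hmin].
  apply: hgen => //; first exact/hnz.
  by move=> i /andP [hi hik] /(hnz _ hi); rewrite leqNgt hik.
have hkm : k <= m by apply/hnz.
suff -> : m = k by [].
apply/eqP; rewrite eqn_leq hkm andbT leqNgt; apply/negP => hkm'.
by apply: (hmin k); [rewrite hlo | apply/hnz].
Qed.

Theorem proposition3p8 (K : fieldType) (n : nat) (a : 'I_n -> nat) (d : nat)
  (ha : forall i, (0 < a i)%N) (hd : (0 < d)%N)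
  (had : (d < aA a [set: 'I_n])%N)
  (k0 : nat) (hk0pos : (0 < k0)%N)
  (hk0 : (n - 1 <= k0 * (aA a [set: 'I_n] - d))%N)
  (hk0min : forall k, (0 < k)%N -> (n - 1 <= k * (aA a [set: 'I_n] - d))%N ->
     (k0 <= k)%N) :
  let I := @veronese_ideal K n a d in
  [/\ equi_generated 0 (Soc_nonzero I) (Soc_generated_in I)
       <-> equi_generated 1 (SocStar_nonzero I d) (SocStar_generated_in I d),
      equi_generated 1 (SocStar_nonzero I d) (SocStar_generated_in I d)
       <-> (forall A : {set 'I_n}, (d < aA a A)%N ->
              (#|A| - 1 <= k0 * (aA a A - d))%N)
    & (forall A : {set 'I_n}, (d < aA a A)%N ->
              (#|A| - 1 <= k0 * (aA a A - d))%N)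
       <-> equi_generated 0 (Soc_nonzero I) (Soc_generated_in I)].
Proof.
move=> I.
have n_gt0 : 0 < n.
  case: (posnP n) => // n0; move: had; rewrite /aA big1 // => i _.
  by have := ltn_ord i; rewrite {2}n0.
have socle_levelE m : 0 < m -> (exists u, socle_mon a d m u) <-> k0 <= m.
  move=> m_gt0; rewrite (exists_socle_mon ha hd m_gt0 (ltnW had)).
  by split=> [/(hk0min _ m_gt0) // | hm]; apply: leq_trans hk0 (leq_mul hm _).
have SocE : equi_generated 0 (Soc_nonzero I) (Soc_generated_in I) <-> socle_generated_in a d k0.
  rewrite -(Soc_generated_inE K a hd n_gt0 hk0pos); apply: equi_generatedE => // m _.
  rewrite (Soc_nonzeroE K a hd n_gt0); split=> [[m_gt0 /(socle_levelE _ m_gt0)] // | hm].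
  by have m_gt0 := leq_trans hk0pos hm; split; last exact/socle_levelE.
have SocStarE : equi_generated 1 (SocStar_nonzero I d) (SocStar_generated_in I d) <->
    socle_generated_in a d k0.
  rewrite -(SocStar_generated_inE K a hd n_gt0 hk0pos).
  apply: equi_generatedE => // m m_gt0.
  by rewrite (SocStar_nonzeroE K a hd n_gt0 m_gt0); apply: socle_levelE.
by split; rewrite ?SocE ?SocStarE ?(socle_generated_inE ha hd hk0pos).
Qed.
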